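(* Let $1\leqslant k\leqslant d$ and let $F\subseteq S^d$ be a $k$-neighborly family of strings of maximum possible size (i.e., no $k$-neighborly family in $S^d$ has more elements). Then every string in $F$ has at most $d-k$ jokers.
   Context: Let $S=\{0,1,\ast\}$ and let $S^d$ be the set of strings of length $d$ over $S$; the symbol $\ast$ is called a joker. For $x,y\in S^d$, $d(x,y)$ is the number of positions $i\in[d]$ such that one of $x_i,y_i$ equals $0$ and the other equals $1$. A family $F\subseteq S^d$ is $k$-neighborly if $1\leqslant d(x,y)\leqslant k$ for all distinct $x,y\in F$. *)

From HB Require Import structures.
From mathcomp Require Import all_boot.
Set Implicit Arguments. Unset Strict Implicit. Unset Printing Implicit Defensive.

Inductive sym := S0 | S1 | Joker.

Definition sym_to_ord (s : sym) : 'I_3 :=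
  match s with S0 => inord 0 | S1 => inord 1 | Joker => inord 2 end.
Definition ord_to_sym (i : 'I_3) : sym :=
  match val i with 0 => S0 | 1 => S1 | _ => Joker end.
Lemma sym_ordK : cancel sym_to_ord ord_to_sym.
Proof. by case; rewrite /ord_to_sym /= inordK. Qed.
HB.instance Definition _ := Finite.copy sym (can_type sym_ordK).

Definition str (d : nat) := {ffun 'I_d -> sym}.

Definition conflict (a b : sym) : bool :=
  match a, b with S0, S1 | S1, S0 => true | _, _ => false end.

Definition dist (d : nat) (x y : str d) : nat :=
  #|[set i : 'I_d | conflict (x i) (y i)]|.

Definition neighborly (d k : nat) (F : {set str d}) : Prop :=
  forall x y, x \in F -> y \in F -> x != y -> 1 <= dist x y <= k.

Definition jokers (d : nat) (x : str d) : nat :=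
  #|[set i : 'I_d | x i == Joker]|.

(** Suppose some [x] in a maximum family [F] had more than [d - k] jokers, and
    let [i] be a joker position of [x].  Replace [x] by the two strings [x0], [x1]
    obtained by writing [0], resp. [1], at position [i].  They conflict with each
    other, and with every other member of [F] at least wherever [x] did; having
    at least [d - k] jokers, each conflicts with anything in at most [k]
    positions.  The new family is [k]-neighborly and one element larger. *)

From mathcomp Require Import all_boot.
From mathcomp Require Import zify.
Set Implicit Arguments. Unset Strict Implicit.

Definition upd d (x : str d) (i : 'I_d) (s : sym) : str d :=
  [ffun t => if t == i then s else x t].

Lemma conflictC a b : conflict a b = conflict b a.
Proof. by case: a; case: b. Qed.

Lemma distC d (x y : str d) : dist x y = dist y x.
Proof. by apply: eq_card => t; rewrite !inE conflictC. Qed.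

Lemma dist_le_nonjokers d (x y : str d) : dist x y <= d - jokers x.
Proof.
have sub : [set i | conflict (x i) (y i)] \subset ~: [set i | x i == Joker].
  apply/subsetP => t; rewrite !inE => ct; apply/eqP => xt.
  by move: ct; rewrite xt; case: (y t).
by rewrite (leq_trans (subset_leq_card sub)) // cardsCs setCK card_ord.
Qed.

Lemma jokers_upd d (x : str d) i s : jokers x <= (jokers (upd x i s)).+1.
Proof.
have sub : [set t | x t == Joker] \subset i |: [set t | upd x i s t == Joker].
  by apply/subsetP => t; rewrite !inE ffunE; case: (t =P i).
by apply: leq_trans (subset_leq_card sub) _; rewrite cardsU1; case: (_ \notin _).
Qed.

Lemma dist_upd_joker d (x y : str d) i s :
  x i = Joker -> dist x y <= dist (upd x i s) y.
Proof.
move=> xi; apply/subset_leq_card/subsetP => t; rewrite !inE ffunE.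
by case: (t =P i) => // ->; rewrite xi.
Qed.

Lemma dist_upd_joker_self d (x : str d) i s : x i = Joker -> dist x (upd x i s) = 0.
Proof.
move=> xi; apply/eqP; rewrite cards_eq0; apply/eqP/setP => t.
by rewrite !inE ffunE; case: (t =P i) => [->|_]; [rewrite xi | case: (x t)].
Qed.

Lemma dist_upd_gt0 d (x y : str d) i s t :
  conflict s t -> 0 < dist (upd x i s) (upd y i t).
Proof. by move=> st; apply/card_gt0P; exists i; rewrite inE !ffunE eqxx. Qed.

Lemma neighborly_subset d k (F G : {set str d}) :
  G \subset F -> neighborly k F -> neighborly k G.
Proof. by move=> /subsetP GF nF x y /GF xF /GF yF; apply: nF. Qed.

Lemma neighborly_setU1 d k (a : str d) (F : {set str d}) :
  neighborly k F -> (forall y, y \in F -> y != a -> 0 < dist a y <= k) ->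
  neighborly k (a |: F).
Proof.
move=> nF naF x y; rewrite !in_setU1.
case: (x =P a) => [-> _|_ /= xF]; case: (y =P a) => [-> _|_ /= yF].
- by rewrite eqxx.
- by rewrite eq_sym; apply: naF.
- by rewrite distC; apply: naF.
- exact: nF.
Qed.

Definition split_joker d (F : {set str d}) (x : str d) (i : 'I_d) :=
  upd x i S0 |: (upd x i S1 |: F :\ x).

Section SplitJoker.

Variables (d k : nat) (F : {set str d}) (x : str d) (i : 'I_d).
Hypotheses (nF : neighborly k F) (xF : x \in F) (xi : x i = Joker).

Lemma upd_joker_notin s : upd x i s \notin F :\ x.
Proof.
rewrite !inE; apply/andP => -[ne yF].
by have := nF yF xF ne; rewrite distC dist_upd_joker_self.
Qed.

Lemma card_split_joker : #|split_joker F x i| = #|F|.+1.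
Proof.
have ne01 : upd x i S0 != upd x i S1.
  by apply/negP => /eqP /ffunP /(_ i); rewrite !ffunE eqxx.
rewrite !cardsU1 in_setU1 negb_or ne01 !upd_joker_notin.
by rewrite (cardsD1 x F) xF.
Qed.

Hypothesis many_jokers : d < jokers x + k.

Lemma dist_upd_le s y : dist (upd x i s) y <= k.
Proof.
have := dist_le_nonjokers (upd x i s) y; have := jokers_upd x i s.
have : 0 < jokers x by apply/card_gt0P; exists i; rewrite inE xi.
lia.
Qed.

Lemma dist_upd_bound s y : y \in F :\ x -> 0 < dist (upd x i s) y <= k.
Proof.
rewrite !inE => /andP[yx yF]; rewrite dist_upd_le andbT.
have /andP[dxy _] : 0 < dist x y <= k by apply: nF; rewrite // eq_sym.
exact: leq_trans dxy (dist_upd_joker _ _ xi).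
Qed.

Lemma neighborly_split_joker : neighborly k (split_joker F x i).
Proof.
apply: neighborly_setU1; first apply: neighborly_setU1.
- exact: neighborly_subset (subsetDl F [set x]) nF.
- by move=> y yF _; apply: dist_upd_bound.
- move=> y; rewrite in_setU1 => /predU1P [-> _|yF _].
    by rewrite dist_upd_gt0 ?dist_upd_le.
  exact: dist_upd_bound.
Qed.

End SplitJoker.

Theorem lemma1 (d k : nat) (F : {set str d}) :
  1 <= k <= d ->
  neighborly k F ->
  (forall G : {set str d}, neighborly k G -> #|G| <= #|F|) ->
  forall x, x \in F -> jokers x <= d - k.
Proof.
move=> _ nF maxF x xF; apply/contraT; rewrite -ltnNge => many.
have many_jokers : d < jokers x + k by lia.
have /card_gt0P [i] : 0 < jokers x by lia.
rewrite inE => /eqP xi.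
have := maxF _ (neighborly_split_joker nF xF xi many_jokers).
by rewrite (card_split_joker nF xF xi) ltnn.
Qed.
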